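(* Let $q$ be a prime power, $b$ a positive integer, and $\boldsymbol{B}$ an $M\times M$ matrix with nonnegative integer entries. For any permutation $\sigma$ of $\{1,2,\ldots,M\}$, \[ N_b(\boldsymbol{B})\le\min_{r\in\mathbb{N}}\Big\{r\ :\ q^r>\max_{j\in\{1,\ldots,M\}}\sum_{i=1}^{j-1}\big|\mathcal{B}^b_r([\boldsymbol{B}]_{\sigma(i)\sigma(j)}-1)\big|\Big\}. \]
   Context: For $\boldsymbol{z}=(z_0,\ldots,z_{n-1}),\boldsymbol{w}\in\mathbb{F}_q^n$, $d_b(\boldsymbol{z},\boldsymbol{w})$ is the number of $i\in\{0,\ldots,n-1\}$ with $(z_i,\ldots,z_{i+b-1})\ne(w_i,\ldots,w_{i+b-1})$ (indices mod $n$). $\mathcal{B}^b_r(s)=\{\boldsymbol{y}\in\mathbb{F}_q^r: d_b(\boldsymbol{x},\boldsymbol{y})\le s\}$ is the $b$-symbol ball of radius $s$ around a fixed $\boldsymbol{x}\in\mathbb{F}_q^r$ (empty for $s<0$). $N_b(\boldsymbol{B})$ is the smallest $r$ such that there exist $\boldsymbol{p}_1,\ldots,\boldsymbol{p}_M\in\mathbb{F}_q^r$ (in some ordering) with $d_b(\boldsymbol{p}_i,\boldsymbol{p}_j)\ge[\boldsymbol{B}]_{ij}$ for all $i,j$.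
   Formalization: The matrix $\boldsymbol{B}$ is assumed symmetric, and in $N_b(\boldsymbol{B})$ the condition $d_b(\boldsymbol{p}_i,\boldsymbol{p}_j)\ge[\boldsymbol{B}]_{ij}$ is imposed only for i ≠ j. The statement above fails without it. *)

From HB Require Import structures.
From mathcomp Require Import all_boot all_order all_algebra all_fingroup.
Set Implicit Arguments. Unset Strict Implicit. Unset Printing Implicit Defensive.
Import GRing.Theory.

(* Vectors of F_q^n are n-tuples; coordinates indexed 0..n-1, read mod n. *)

Definition bwin_diff (F : finFieldType) (b n : nat) (z w : n.-tuple F) (i : nat) : bool :=
  has (fun k => nth (0%R : F) z ((i + k) %% n) != nth (0%R : F) w ((i + k) %% n)) (iota 0 b).

Definition db (F : finFieldType) (b n : nat) (z w : n.-tuple F) : nat :=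
  count (bwin_diff b z w) (iota 0 n).

(* b-symbol ball of radius s (an integer, empty if s < 0) in F^r, around the
   fixed centre x = 0 *)
Definition bball (F : finFieldType) (b r : nat) (s : int) : {set r.-tuple F} :=
  [set y : r.-tuple F | ((db b [tuple (0%R : F) | _ < r] y)%:Z <= s)%R].

Definition Nb_admissible (F : finFieldType) (b M : nat) (B : 'M[nat]_M) (r : nat) : Prop :=
  exists p : 'I_M -> r.-tuple F, forall i j : 'I_M, i != j -> B i j <= db b (p i) (p j).

Definition GV_cond (F : finFieldType) (b M : nat) (B : 'M[nat]_M) (sigma : 'S_M) (r : nat) : bool :=
  \max_(j < M) \sum_(i < M | (i < j)%N) #|bball F b r ((B (sigma i) (sigma j))%:Z - 1)%R|
    < #|F| ^ r.

From HB Require Import structures.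
From mathcomp Require Import all_boot all_order all_algebra all_fingroup.
From mathcomp Require Import zify.
From Stdlib Require Import Classical Wf_nat.
Import GRing.Theory.

Set Implicit Arguments. Unset Strict Implicit. Unset Printing Implicit Defensive.

(* A Gilbert-Varshamov greedy argument.  Choose the points in the order
   sigma(1), ..., sigma(M).  When the j-th one is chosen, the words forbidden by
   an earlier point p are those in the b-symbol ball of radius
   B_{sigma(i)sigma(j)} - 1 around p, a translate of the ball around 0.  While
   these balls have fewer than q^r words in total, some word of F^r is still
   free.  The symmetry of B and of d_b extends the constraints between earlier
   and later points to all pairs. *)

Lemma card_bigcup_leq (T I : finType) (P : pred I) (A : I -> {set T}) :
  #|\bigcup_(i | P i) A i| <= \sum_(i | P i) #|A i|.
Proof.
elim/big_ind2: _ => [|m X n Y leXm leYn|//]; first by rewrite cards0.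
exact: leq_trans (leq_card_setU X Y) (leq_add leXm leYn).
Qed.

Section GreedyAssignment.

Variables (T : finType) (n : nat) (bad : 'I_n -> 'I_n -> T -> T -> bool).
Variable vol : 'I_n -> 'I_n -> nat.

Hypothesis card_bad_leq : forall i j x, #|[set y | bad i j x y]| <= vol i j.
Hypothesis sum_vol_lt : forall j : 'I_n, \sum_(i < n | i < j) vol i j < #|T|.

Lemma greedy_prefix k : k <= n ->
  exists p : 'I_n -> T, forall i j : 'I_n, i < j -> j < k -> ~~ bad i j (p i) (p j).
Proof.
elim: k => [_ | k IHk lt_kn].
  have [y0 _ | T0] := pickP T; first by exists (fun=> y0).
  suff noI : 'I_n -> False by exists (fun i => match noI i with end).
  by move=> i; have := sum_vol_lt i; rewrite eq_card0.
have [p good_p] := IHk (ltnW lt_kn).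
pose j0 := Ordinal lt_kn.
pose Bad := \bigcup_(i < n | i < j0) [set y | bad i j0 (p i) y].
have : 0 < #|~: Bad|.
  rewrite -(ltn_add2l #|Bad|) addn0 cardsC; apply: leq_ltn_trans (sum_vol_lt j0).
  by apply: leq_trans (card_bigcup_leq _ _) _; apply: leq_sum => i _.
case/card_gt0P => y; rewrite inE => yNBad.
exists (fun l => if l == j0 then y else p l) => i j lt_ij lt_jk.
have neq_ij0 : (i == j0) = false by rewrite -val_eqE /= ltn_eqF ?(leq_trans lt_ij).
rewrite neq_ij0; case: eqP => [eq_jj0 | /eqP neq_jj0].
  rewrite eq_jj0 in lt_ij *; apply: contra yNBad => bad_y.
  by apply/bigcupP; exists i; rewrite ?inE.
apply: good_p => //; rewrite ltn_neqAle -ltnS lt_jk andbT.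
by apply: contra neq_jj0 => /eqP eq_jk; apply/eqP/val_inj.
Qed.

Lemma greedy_assignment :
  exists p : 'I_n -> T, forall i j : 'I_n, i < j -> ~~ bad i j (p i) (p j).
Proof.
have [p good_p] := greedy_prefix (leqnn n).
by exists p => i j lt_ij; apply: good_p.
Qed.

End GreedyAssignment.

Lemma eq_db (F : finFieldType) b n (z w z' w' : n.-tuple F) :
  (forall m, (nth 0%R z m == nth 0%R w m) = (nth 0%R z' m == nth 0%R w' m)) ->
  db b z w = db b z' w'.
Proof. by move=> eq_zw; apply: eq_count => i; apply: eq_has => k /=; rewrite eq_zw. Qed.

Lemma db_sym (F : finFieldType) b n (z w : n.-tuple F) : db b z w = db b w z.
Proof. by apply: eq_db => m; rewrite eq_sym. Qed.

Section Translation.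

Variables (F : finFieldType) (b r : nat).

Definition subt (y x : r.-tuple F) : r.-tuple F := [tuple (tnth y k - tnth x k)%R | k < r].

Lemma nth_subt y x m : nth 0%R (subt y x) m = (nth 0%R y m - nth 0%R x m)%R.
Proof.
case: (ltnP m r) => [lt_mr | le_rm]; last by rewrite !nth_default ?size_tuple ?subr0.
by rewrite -[m]/(val (Ordinal lt_mr)) nth_mktuple !(tnth_nth 0%R).
Qed.

Lemma nth_tuple0 m : nth 0%R [tuple (0%R : F) | _ < r] m = 0%R.
Proof.
case: (ltnP m r) => [lt_mr | le_rm]; last by rewrite nth_default ?size_tuple.
by rewrite -[m]/(val (Ordinal lt_mr)) nth_mktuple.
Qed.

Lemma db_subt (x y : r.-tuple F) : db b x y = db b [tuple (0%R : F) | _ < r] (subt y x).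
Proof. by apply: eq_db => m; rewrite nth_subt nth_tuple0 (eq_sym 0%R) subr_eq0 eq_sym. Qed.

Lemma subt_inj x : injective (subt ^~ x).
Proof.
move=> y y' eq_yy'; apply: eq_from_tnth => k.
by have := congr1 (fun t => tnth t k) eq_yy'; rewrite !tnth_mktuple; apply: addIr.
Qed.

Lemma card_db_lt_leq (x : r.-tuple F) (c : nat) :
  #|[set y | db b x y < c]| <= #|bball F b r (c%:Z - 1)%R|.
Proof.
rewrite -(card_imset _ (@subt_inj x)); apply: subset_leq_card.
apply/subsetP => z /imsetP[y]; rewrite inE => lt_c ->; rewrite inE -db_subt; lia.
Qed.

End Translation.

Lemma GV_cond_admissible (F : finFieldType) b M (B : 'M[nat]_M) (sigma : 'S_M) r :
  (forall i j, B i j = B j i) -> GV_cond F b B sigma r -> Nb_admissible F b B r.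
Proof.
move=> Bsym GV.
pose bad i j (x y : r.-tuple F) := db b x y < B (sigma i) (sigma j).
pose vol i j := #|bball F b r ((B (sigma i) (sigma j))%:Z - 1)%R|.
have [||p good_p] := @greedy_assignment _ _ bad vol.
- by move=> i j x; apply: card_db_lt_leq.
- by move=> j; rewrite card_tuple; apply: leq_ltn_trans GV; apply: leq_bigmax.
exists (fun k => p (sigma^-1 k)%g) => k l neq_kl.
wlog lt_kl : k l neq_kl / sigma^-1%g k < sigma^-1%g l.
  move=> gen.
  case: (ltngtP (sigma^-1%g k) (sigma^-1%g l)) => [|gt_kl|/val_inj/perm_inj eq_kl].
  - exact: gen.
  - by rewrite Bsym db_sym; apply: gen; rewrite // eq_sym.
  - by rewrite eq_kl eqxx in neq_kl.
by have := good_p _ _ lt_kl; rewrite /bad !permKV -leqNgt.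
Qed.

Lemma exists_least_nat (P : nat -> Prop) n : P n ->
  exists m, [/\ P m, forall k, k < m -> ~ P k & m <= n].
Proof.
move=> Pn.
have [m [[Pm least_m] _]] :=
  @dec_inh_nat_subset_has_unique_least_element P (fun k => classic (P k)) (ex_intro P n Pn).
exists m; split=> // [k lt_km Pk|]; [have := least_m k Pk | have := least_m n Pn]; lia.
Qed.

Theorem lemma4p3 (F : finFieldType) (b M : nat) (B : 'M[nat]_M) (sigma : 'S_M) :
  0 < b ->
  (forall i j : 'I_M, B i j = B j i) ->
  forall r0 : nat,
    GV_cond F b B sigma r0 -> (forall r, r < r0 -> ~~ GV_cond F b B sigma r) ->
    exists N : nat,
      [/\ Nb_admissible F b B N,
          (forall r, r < N -> ~ Nb_admissible F b B r) &
          N <= r0].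
Proof.
move=> _ Bsym r0 GV_r0 _.
exact: exists_least_nat (GV_cond_admissible Bsym GV_r0).
Qed.
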